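(* Let $R$ be a skew field and let $n \geqslant 3$ be an integer. Let $P$ be an $n$-gon whose vertex set is numbered by $\{1,\ldots,n\}$ so that $1<2<\cdots<n<1$ or $1>2>\cdots>n>1$ in the cyclic order of the vertices. Let $c : \operatorname{diag} P \to R^*$ be a frieze, and let $M_c$ be the $n \times n$ matrix whose $(i,k)$ entry is $c_{ik}$ for $i \neq k$ and $0$ for $i=k$. Then the Dieudonné determinant of $M_c$ is \[ \det M_c = \overline{-(-2)^{n-2}} \cdot \overline{c_{12}c_{23}\cdots c_{n-1,n}c_{n1}}. \]
   Context: A polygon $P$ is a finite set $V$ of at least three vertices with a cyclic ordering; $\operatorname{diag} P$ is the set of ordered pairs $(i,k)$ of distinct vertices (called diagonals), and we write $c_{ik}$ for $c(i,k)$. Diagonals $(i,k)$ and $(j,\ell)$ cross if $i,j,k,\ell$ are pairwise distinct and $i<j<k<\ell$ or $i<\ell<k<j$ in the cyclic order. For a ring $R$ with group of units $R^*$, a map $c:\operatorname{diag}P\to R^*$ is a frieze if (i) for all pairwise distinct vertices $i,j,k$ the triangle relation $c_{ij}c_{kj}^{-1}c_{ki}=c_{ik}c_{jk}^{-1}c_{ji}$ holds, and (ii) whenever $(i,k)$ and $(j,\ell)$ cross, the exchange relation $c_{ik}=c_{ij}c_{\ell j}^{-1}c_{\ell k}+c_{i\ell}c_{j\ell}^{-1}c_{jk}$ holds. For a skew field $R$, the Dieudonné determinant takes values in $(R^*/[R^*,R^*])\,\dot\cup\,\{0\}$; for $x \in R^*$, $\overline{x}$ denotes the coset of $x$ in the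 abelianisation $R^*/[R^*,R^*]$, and $\overline{0}=0$. *)

From HB Require Import structures.
From mathcomp Require Import all_boot all_order all_algebra.
Set Implicit Arguments. Unset Strict Implicit. Unset Printing Implicit Defensive.
Import Order.TTheory GRing.Theory Num.Theory.
Local Open Scope ring_scope.

Section Defs.
Variable R : unitRingType.

Definition skew_field : Prop := forall x : R, x != 0 -> x \is a GRing.unit.

Inductive comm_sub : R -> Prop :=
| comm_sub1 : comm_sub 1
| comm_subM : forall a b x, a \is a GRing.unit -> b \is a GRing.unit ->
    comm_sub x -> comm_sub (x * (a * b * a^-1 * b^-1)).

(* x and y have the same image in (R^*/[R^*,R^*]) \cup {0} *)
Definition ab_eq (x y : R) : Prop :=
  (x = 0 /\ y = 0) \/
  [/\ x \is a GRing.unit, y \is a GRing.unit & comm_sub (x * y^-1)].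

Variable n : nat.

Definition mx_invertible (M : 'M[R]_n) : Prop :=
  exists N : 'M[R]_n, M *m N = 1%:M /\ N *m M = 1%:M.

Definition transvection (i j : 'I_n) (a : R) : 'M[R]_n :=
  1%:M + a *: delta_mx i j.

Inductive elementary_mx : 'M[R]_n -> Prop :=
| elem1 : elementary_mx 1%:M
| elemM : forall E i j a, i != j -> elementary_mx E ->
    elementary_mx (E *m transvection i j a).

Definition diag_last (d : R) : 'M[R]_n :=
  \matrix_(i, j) (if i == j then (if (i : nat) == n.-1 then d else 1) else 0).

(* "the Dieudonne determinant of M equals the class of r":
   det M = 0 if M is singular; otherwise M = E * diag(1,...,1,d) with E in
   the elementary subgroup, and det M is the class of d (well defined by
   Dieudonne's theorem). *)
Definition dieudonne_det_is (M : 'M[R]_n) (r : R) : Prop :=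
  (~ mx_invertible M /\ r = 0) \/
  (exists (E : 'M[R]_n) (d : R),
      [/\ elementary_mx E, M = E *m diag_last d & ab_eq d r]).

(* strict cyclic order on the vertices 'I_n = {0,...,n-1} *)
Definition cyc3 (a b c : 'I_n) : bool :=
  [|| (a < b < c)%N, (b < c < a)%N | (c < a < b)%N].

Definition cyc4 (a b c d : 'I_n) : bool := cyc3 a b c && cyc3 a c d.

Definition crossing (i k j l : 'I_n) : bool := cyc4 i j k l || cyc4 i l k j.

Definition is_frieze (c : 'I_n -> 'I_n -> R) : Prop :=
  [/\ (forall i k, i != k -> c i k \is a GRing.unit),
      (forall i j k, i != j -> j != k -> i != k ->
          c i j * (c k j)^-1 * c k i = c i k * (c j k)^-1 * c j i)
    & (forall i k j l, crossing i k j l ->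
          c i k = c i j * (c l j)^-1 * c l k + c i l * (c j l)^-1 * c j k)].

Definition frieze_mx (c : 'I_n -> 'I_n -> R) : 'M[R]_n :=
  \matrix_(i, k) (if i == k then 0 else c i k).

End Defs.

From HB Require Import structures.
From mathcomp Require Import all_boot all_order all_algebra zify.
Import GRing.Theory.
Local Open Scope ring_scope.
Set Implicit Arguments. Unset Strict Implicit.

(* Number the vertices 0, ..., n-1 and let w = c01 c(n-1)1^-1 c(n-1)0.  The
   exchange relations for the crossing diagonals (0,l), (1,n-1) and the
   triangle relation for 0, 1, n-1 show that row 0 of M_c minus suitable
   multiples of rows n-1 and 1 is (-2w, 0, ..., 0).  If 2 = 0 this is a
   nontrivial row relation, so M_c is singular.  Otherwise the first column
   can be cleared too, leaving diag(-2w, M_c') where c' is the frieze on the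
   (n-1)-gon 1 < ... < n-1.  Induction down to the 2-gon and Whitehead's lemma
   diag(g, h) ~ diag(1, gh) reduce M_c to diag(1, ..., 1, d); modulo
   commutators w times the cyclic product of c' is the cyclic product of c,
   which gives the class of d. *)

Section Abelianization.
Variable R : unitRingType.
Implicit Types a b g x y z : R.

Lemma comm_sub_mul x y : comm_sub x -> comm_sub y -> comm_sub (x * y).
Proof.
move=> cx; elim=> [|a b y' ua ub _ IH]; first by rewrite mulr1.
by rewrite mulrA; apply: comm_subM.
Qed.

Lemma comm_sub_commutator a b : a \is a GRing.unit -> b \is a GRing.unit ->
  comm_sub (a * b * a^-1 * b^-1).
Proof. by move=> ua ub; rewrite -[_ * b^-1]mul1r; apply: comm_subM => //; constructor. Qed.

Lemma comm_sub_conj g x : g \is a GRing.unit -> comm_sub x -> comm_sub (g * x * g^-1).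
Proof.
move=> ug; elim=> [|a b y ua ub _ IH]; first by rewrite mulr1 mulrV //; constructor.
have ->: g * (y * (a * b * a^-1 * b^-1)) * g^-1 =
    (g * y * g^-1) * ((g * a * b * (g * a)^-1 * b^-1) * (b * g * b^-1 * g^-1)).
  by rewrite invrM // -!mulrA !mulKr.
by do 2!apply: comm_sub_mul => //; apply: comm_sub_commutator; rewrite ?unitrMr.
Qed.

Definition ab_equiv x y : Prop :=
  [/\ x \is a GRing.unit, y \is a GRing.unit & comm_sub (x * y^-1)].

Lemma ab_equiv_refl x : x \is a GRing.unit -> ab_equiv x x.
Proof. by move=> ux; split; rewrite // mulrV //; constructor. Qed.

Lemma ab_equiv_trans x y z : ab_equiv x y -> ab_equiv y z -> ab_equiv x z.
Proof.
case=> ux uy cxy [_ uz cyz]; split=> //.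
by have := comm_sub_mul cxy cyz; rewrite -mulrA mulKr.
Qed.

Lemma ab_equivM x x' y y' :
  ab_equiv x x' -> ab_equiv y y' -> ab_equiv (x * y) (x' * y').
Proof.
case=> ux ux' cx [uy uy' cy]; split; rewrite ?unitrMr //.
have ->: x * y * (x' * y')^-1 = (x * (y * y'^-1) * x^-1) * (x * x'^-1).
  by rewrite invrM // -!mulrA mulKr.
by apply: comm_sub_mul => //; apply: comm_sub_conj.
Qed.

Lemma ab_equivC x y : x \is a GRing.unit -> y \is a GRing.unit ->
  ab_equiv (x * y) (y * x).
Proof.
move=> ux uy; split; rewrite ?unitrMr //.
by rewrite invrM // !mulrA; apply: comm_sub_commutator.
Qed.

Lemma ab_equivN x y : ab_equiv x y -> ab_equiv (- x) (- y).
Proof. by case=> ux uy cxy; split; rewrite ?unitrN // invrN mulrNN. Qed.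

End Abelianization.

Section ElementaryRowOperations.
Variables (R : unitRingType) (n : nat).
Implicit Types (E F M N : 'M[R]_n) (i j k : 'I_n) (a : R).

Lemma elementary_mxM E F : elementary_mx E -> elementary_mx F -> elementary_mx (E *m F).
Proof.
move=> eE; elim=> [|F' i j a ij _ IH]; first by rewrite mulmx1.
by rewrite mulmxA; apply: elemM.
Qed.

Definition elem_equiv M N : Prop := exists2 E, elementary_mx E & M = E *m N.

Lemma elem_equiv_refl M : elem_equiv M M.
Proof. by exists 1%:M; [constructor | rewrite mul1mx]. Qed.

Lemma elem_equiv_trans M N N' : elem_equiv M N -> elem_equiv N N' -> elem_equiv M N'.
Proof.
case=> [E eE ->] [F eF ->]; exists (E *m F); first exact: elementary_mxM.
by rewrite mulmxA.
Qed.

Definition add_row M i j a : 'M[R]_n :=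
  \matrix_(k, l) (if k == i then M k l + a * M j l else M k l).

Lemma transvection_mulmx i j a M : transvection i j a *m M = add_row M i j a.
Proof.
apply/matrixP => k l; rewrite /transvection mulmxDl mul1mx !mxE (bigD1 j) //=.
rewrite big1 => [|m /negbTE mj]; last by rewrite !mxE mj andbF mulr0 mul0r.
by rewrite !mxE eqxx andbT addr0; case: (k == i); rewrite ?mulr1 ?mulr0 ?mul0r ?addr0.
Qed.

Lemma elem_equiv_add_row M i j a : i != j -> elem_equiv M (add_row M i j a).
Proof.
move=> ij; exists (transvection i j (- a)).
  by rewrite -[transvection _ _ _]mul1mx; apply: elemM => //; constructor.
apply/matrixP => k l; rewrite transvection_mulmx !mxE [j == i]eq_sym (negbTE ij).
by case: (k == i); rewrite ?mulNr ?addrK.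
Qed.

Definition add_rows M j (a : 'I_n -> R) (s : seq 'I_n) : 'M[R]_n :=
  \matrix_(k, l) (if k \in s then M k l + a k * M j l else M k l).

Lemma elem_equiv_add_rows M j (a : 'I_n -> R) s :
  j \notin s -> uniq s -> elem_equiv M (add_rows M j a s).
Proof.
elim: s => [|k s IH] /=.
  have ->: add_rows M j a [::] = M by apply/matrixP => k l; rewrite mxE.
  by move=> _ _; apply: elem_equiv_refl.
rewrite inE negb_or => /andP[jk js] /andP[ks us].
apply: (elem_equiv_trans (IH js us)).
have ->: add_rows M j a (k :: s) = add_row (add_rows M j a s) k j (a k).
  apply/matrixP => k' l; rewrite !mxE inE (negbTE js).
  by have [->|] := eqVneq k' k; rewrite ?(negbTE ks).
by apply: elem_equiv_add_row; rewrite eq_sym.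
Qed.

End ElementaryRowOperations.

Section BlockDiagonal.
Variables (R : unitRingType) (n : nat).
Implicit Types (g h : R) (A B : 'M[R]_n).

Definition block0_mx g A : 'M[R]_n.+1 :=
  \matrix_(k, l) match unlift ord0 k, unlift ord0 l with
                 | Some k', Some l' => A k' l'
                 | None, None => g
                 | _, _ => 0 end.

Lemma block0_mx00 g A : block0_mx g A ord0 ord0 = g.
Proof. by rewrite mxE unlift_none. Qed.

Lemma block0_mx0l g A j : block0_mx g A ord0 (lift ord0 j) = 0.
Proof. by rewrite mxE unlift_none liftK. Qed.

Lemma block0_mxl0 g A i : block0_mx g A (lift ord0 i) ord0 = 0.
Proof. by rewrite mxE unlift_none liftK. Qed.

Lemma block0_mxll g A i j : block0_mx g A (lift ord0 i) (lift ord0 j) = A i j.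
Proof. by rewrite mxE !liftK. Qed.

Definition block0_mxE := (block0_mx00, block0_mx0l, block0_mxl0, block0_mxll).

Lemma mul_block0_mx g h A B : block0_mx g A *m block0_mx h B = block0_mx (g * h) (A *m B).
Proof.
apply/matrixP => k l; rewrite mxE big_ord_recl.
case: (unliftP ord0 k) => [k'|] ->; case: (unliftP ord0 l) => [l'|] ->;
  rewrite !block0_mxE ?mxE ?mul0r ?mulr0 ?add0r.
- by apply: eq_bigr => i _; rewrite !block0_mxll.
all: by rewrite big1 ?addr0 // => i _; rewrite ?block0_mx0l ?block0_mxl0 ?mulr0 ?mul0r.
Qed.

Lemma block0_mx_transvection i j a :
  block0_mx 1 (transvection i j a) = transvection (lift ord0 i) (lift ord0 j) a.
Proof.
apply/matrixP => k l.
case: (unliftP ord0 k) => [k'|] ->; case: (unliftP ord0 l) => [l'|] ->;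
  rewrite !block0_mxE !mxE ?eqxx ?(inj_eq lift_inj) ?eq_liftF ?lift_eqF //=.
all: by rewrite ?andbF ?mulr0 ?addr0.
Qed.

Lemma block0_mx1 : block0_mx 1 (1%:M : 'M[R]_n) = 1%:M.
Proof.
apply/matrixP => k l.
case: (unliftP ord0 k) => [k'|] ->; case: (unliftP ord0 l) => [l'|] ->;
  by rewrite !block0_mxE !mxE ?eqxx ?(inj_eq lift_inj) ?eq_liftF ?lift_eqF.
Qed.

Lemma elementary_block0_mx E : elementary_mx E -> elementary_mx (block0_mx 1 E).
Proof.
elim=> [|F i j a ij _ IH]; first by rewrite block0_mx1; constructor.
by rewrite -[1 : R]mulr1 -mul_block0_mx block0_mx_transvection; apply: elemM.
Qed.

Lemma elem_equiv_block0_mx g A B :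
  elem_equiv A B -> elem_equiv (block0_mx g A) (block0_mx g B).
Proof.
case=> E eE ->; exists (block0_mx 1 E); first exact: elementary_block0_mx.
by rewrite mul_block0_mx mul1r.
Qed.

End BlockDiagonal.

Section DiagonalReduction.
Variables (R : unitRingType) (n : nat).
Implicit Types g h : R.

Definition diag_ends g h : 'M[R]_n.+2 :=
  \matrix_(k, l) (if k == l then
                    if k == ord0 then g else if k == ord_max then h else 1
                  else 0).

Lemma block0_mx_diag_last g h : block0_mx g (diag_last n.+1 h) = diag_ends g h.
Proof.
apply/matrixP => k l.
case: (unliftP ord0 k) => [k'|] ->; case: (unliftP ord0 l) => [l'|] ->;
  by rewrite !block0_mxE !mxE ?eqxx ?(inj_eq lift_inj) ?eq_liftF ?lift_eqF.
Qed.

(* Whitehead's lemma in the corner 2 x 2 block: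
   diag(g, h) -> [g 0; 1 h] -> [1 (1-g)h; 1 h] -> [1 (1-g)h; 0 gh] -> diag(1, gh). *)
Lemma elem_equiv_diag_ends g h : g \is a GRing.unit ->
  elem_equiv (diag_ends g h) (diag_last n.+2 (g * h)).
Proof.
move=> ug.
have pq : (ord0 : 'I_n.+2) != ord_max by [].
have qp : (ord_max : 'I_n.+2) != ord0 by [].
set M1 := add_row (diag_ends g h) ord_max ord0 g^-1.
set M2 := add_row M1 ord0 ord_max (1 - g).
set M3 := add_row M2 ord_max ord0 (-1).
set M4 := add_row M3 ord0 ord_max (- ((1 - g) * g^-1)).
apply: (elem_equiv_trans (elem_equiv_add_row _ g^-1 qp)); rewrite -/M1.
apply: (elem_equiv_trans (elem_equiv_add_row _ (1 - g) pq)); rewrite -/M2.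
apply: (elem_equiv_trans (elem_equiv_add_row _ (-1) qp)); rewrite -/M3.
apply: (elem_equiv_trans (elem_equiv_add_row _ (- ((1 - g) * g^-1)) pq)); rewrite -/M4.
suff ->: M4 = diag_last n.+2 (g * h) by apply: elem_equiv_refl.
have gB : g + (1 - g) = 1 by rewrite subrKC.
have hB : h - (1 - g) * h = g * h by rewrite mulrBl mul1r opprB subrKC.
have last_max (k : 'I_n.+2) : ((k : nat) == n.+1) = (k == ord_max) by [].
apply/matrixP => k l; rewrite {}/M4 {}/M3 {}/M2 {}/M1 !mxE !last_max.
case: (boolP (k == ord0)) => [/eqP->|kp]; [|case: (boolP (k == ord_max)) => [/eqP->|kq]];
  (case: (boolP (l == ord0)) => [/eqP->|lp]; [|case: (boolP (l == ord_max)) => [/eqP->|lq]]).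
all: rewrite ?[ord0 == l]eq_sym ?[ord_max == l]eq_sym ?eqxx.
all: rewrite ?(negbTE pq) ?(negbTE qp) ?(negbTE kp) ?(negbTE kq) ?(negbTE lp) ?(negbTE lq) //=.
all: rewrite ?mulVr // ?(mulr0, mulr1, mulN1r, oppr0, addr0, add0r, gB, hB, subrr) //.
by rewrite mulNr -!mulrA mulKr // subrr.
Qed.

End DiagonalReduction.

Lemma frieze_lift0 (R : unitRingType) n (c : 'I_n.+1 -> 'I_n.+1 -> R) :
  is_frieze c -> is_frieze (fun i j => c (lift ord0 i) (lift ord0 j)).
Proof.
case=> cU cT cX; split.
- by move=> i k ik; apply: cU; rewrite (inj_eq lift_inj).
- by move=> i j k ij jk ik; apply: cT; rewrite (inj_eq lift_inj).
- move=> i k j l cr; apply: cX; move: cr.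
  by rewrite /crossing /cyc4 /cyc3 !lift0 !ltnS.
Qed.

Section FriezeFirstRow.
Variables (R : unitRingType) (n : nat) (c : 'I_n.+3 -> 'I_n.+3 -> R).
Hypothesis c_frieze : is_frieze c.

Local Notation v1 := (lift ord0 (ord0 : 'I_n.+2)).
Local Notation vL := (ord_max : 'I_n.+3).
Local Notation M := (frieze_mx c).
Local Notation c' := (fun i j : 'I_n.+2 => c (lift ord0 i) (lift ord0 j)).

Let alpha := c ord0 v1 * (c vL v1)^-1.
Let beta := c ord0 vL * (c v1 vL)^-1.
Let w := c ord0 v1 * (c vL v1)^-1 * c vL ord0.

Lemma frieze_mx_row0 l :
  M ord0 l - alpha * M vL l - beta * M v1 l = if l == ord0 then - (w *+ 2) else 0.
Proof.
case: c_frieze => cU cT cX.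
have uL1 : c vL v1 \is a GRing.unit by apply: cU.
have u1L : c v1 vL \is a GRing.unit by apply: cU.
rewrite !mxE.
have [->|l0] := eqVneq l ord0.
  have ->: beta * c v1 ord0 = w by rewrite /beta /w (cT ord0 v1 vL).
  have vL0 : (vL == ord0) = false by [].
  by rewrite vL0 sub0r -opprD mulr2n.
have [->|l1] := eqVneq l v1; first by rewrite mulr0 subr0 /alpha divrK // subrr.
have [->|lL] := eqVneq l vL; first by rewrite mulr0 subr0 /beta divrK // subrr.
rewrite (cX ord0 l v1 vL); last first.
  have /andP[l_gt1 l_ltL] : (1 < l < n.+2)%N.
    by move: (ltn_ord l) l0 l1 lL; rewrite -!val_eqE /= /bump /=; lia.
  by rewrite /crossing /cyc4 /cyc3 !lift0 /= l_gt1 l_ltL (ltn_trans _ l_gt1).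
by rewrite /alpha /beta addrAC addrK subrr.
Qed.

Lemma frieze_w_unit : w \is a GRing.unit.
Proof. by case: c_frieze => cU _ _; rewrite /w !unitrMr ?unitrV; apply: cU. Qed.

Local Notation M0 := (add_row (add_row M ord0 vL (- alpha)) ord0 v1 (- beta)).

Lemma frieze_mx_reduced_row0 l : M0 ord0 l = if l == ord0 then - (w *+ 2) else 0.
Proof. by rewrite -frieze_mx_row0 !mxE eqxx !mulNr. Qed.

Lemma frieze_mx_reduced_row k l : k != ord0 -> M0 k l = M k l.
Proof. by move=> /negbTE k0; rewrite !mxE k0. Qed.

Lemma elem_equiv_frieze_mx_block0 : (2%:R : R) \is a GRing.unit ->
  elem_equiv M (block0_mx (- (w *+ 2)) (frieze_mx c')).
Proof.
move=> u2; have uw2 : w *+ 2 \is a GRing.unit by rewrite -mulr_natr unitrMl ?frieze_w_unit.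
apply: (elem_equiv_trans (elem_equiv_add_row _ (- alpha) (_ : ord0 != vL))) => //.
apply: (elem_equiv_trans (elem_equiv_add_row _ (- beta) (_ : ord0 != v1))) => //.
pose s := [seq k <- enum 'I_n.+3 | k != ord0].
pose a k := M k ord0 / (w *+ 2).
apply: (elem_equiv_trans (elem_equiv_add_rows M0 a (_ : ord0 \notin s) _)).
- by rewrite mem_filter eqxx.
- by rewrite filter_uniq ?enum_uniq.
suff ->: add_rows M0 ord0 a s = block0_mx (- (w *+ 2)) (frieze_mx c').
  exact: elem_equiv_refl.
apply/matrixP => k l; rewrite mxE mem_filter mem_enum andbT.
case: (unliftP ord0 k) => [k'|] ->; last first.
  by rewrite eqxx frieze_mx_reduced_row0; case: (unliftP ord0 l) => [l'|] ->; rewrite block0_mxE.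
rewrite lift_eqF /= frieze_mx_reduced_row ?lift_eqF // frieze_mx_reduced_row0.
case: (unliftP ord0 l) => [l'|] ->.
  by rewrite lift_eqF mulr0 addr0 block0_mxE !mxE (inj_eq lift_inj).
by rewrite eqxx block0_mxE /a mulrN divrK // subrr.
Qed.

Lemma frieze_mx_not_invertible : (2%:R : R) = 0 -> ~ mx_invertible M.
Proof.
move=> two0 [N [MN _]].
have: (M0 *m N) ord0 ord0 = 0.
  rewrite mxE big1 // => l _.
  by rewrite frieze_mx_reduced_row0 -mulr_natr two0 mulr0 oppr0 if_same mul0r.
rewrite -!transvection_mulmx -!mulmxA MN mulmx1 transvection_mulmx !mxE.
have vL0 : (ord0 == vL) = false by [].
by rewrite eqxx lift_eqF vL0 /= !(mulr0, addr0) => /eqP; rewrite oner_eq0.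
Qed.

End FriezeFirstRow.

Lemma prod_ordS_lift0 (R : unitRingType) n (F : 'I_n.+3 -> 'I_n.+3 -> R) :
    F ord_max (lift ord0 ord0) \is a GRing.unit ->
  \prod_(i < n.+3) F i (ordS i) =
  F ord0 (lift ord0 ord0) * (\prod_(i < n.+2) F (lift ord0 i) (lift ord0 (ordS i))
                             * ((F ord_max (lift ord0 ord0))^-1 * F ord_max ord0)).
Proof.
move=> uF; rewrite big_ord_recl big_ord_recr [in RHS]big_ord_recr /=.
have ->: ordS (ord0 : 'I_n.+3) = lift ord0 ord0 by apply: val_inj; rewrite /= modn_small.
have ->: lift ord0 (ord_max : 'I_n.+2) = ord_max by apply: val_inj.
have ->: ordS (ord_max : 'I_n.+3) = ord0 by apply: val_inj; rewrite /= modnn.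
have ->: lift ord0 (ordS (ord_max : 'I_n.+2)) = lift ord0 ord0 by apply: val_inj; rewrite /= modnn.
rewrite [_ * (_^-1 * _)]mulrA mulrK //.
congr (_ * (_ * _)); apply: eq_bigr => i _; congr (F _ _); apply: val_inj.
have := ltn_ord i; rewrite /= /bump /=.
by move=> lt_i; rewrite !modn_small //; lia.
Qed.

Lemma frieze_mx2_reduction (R : unitRingType) (c : 'I_2 -> 'I_2 -> R) :
  is_frieze c -> exists2 d, elem_equiv (frieze_mx c) (diag_last 2 d)
                          & ab_equiv d (- (- 2%:R) ^+ 0 * \prod_(i < 2) c i (ordS i)).
Proof.
case=> cU _ _.
have u01 : c ord0 ord_max \is a GRing.unit by apply: cU.
have u10 : c ord_max ord0 \is a GRing.unit by apply: cU.
exists (c ord_max ord0 * - c ord0 ord_max).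
  apply: (elem_equiv_trans (elem_equiv_add_row _ 1 (_ : ord0 != ord_max))) => //.
  apply: (elem_equiv_trans (elem_equiv_add_row _ (-1) (_ : ord_max != ord0))) => //.
  apply: (elem_equiv_trans (elem_equiv_add_row _ 1 (_ : ord0 != ord_max))) => //.
  apply: (elem_equiv_trans _ (elem_equiv_diag_ends 0 _ u10)).
  set X := add_row _ _ _ _.
  suff ->: X = diag_ends 0 (c ord_max ord0) (- c ord0 ord_max) by apply: elem_equiv_refl.
  have ord2P (k : 'I_2) : (k = ord0) + (k = ord_max).
    by case: k => [[|[|k]] hk] //; [left | right]; apply: val_inj.
  apply/matrixP => k l; rewrite /X.
  by case: (ord2P k) => ->; case: (ord2P l) => ->;
    rewrite !mxE /= ?(mul1r, mulN1r, mulr0, add0r, addr0, subrr, addrN).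
rewrite big_ord_recr big_ord_recl big_ord0 /= mulr1 expr0 mulN1r mulrN.
have ->: widen_ord (leqnSn 1) ord0 = ord0 :> 'I_2 by apply: val_inj.
have ->: ordS ord0 = ord_max :> 'I_2 by apply: val_inj.
have ->: ordS ord_max = ord0 :> 'I_2 by apply: val_inj.
exact/ab_equivN/ab_equivC.
Qed.

Lemma frieze_mx_reduction (R : unitRingType) n (c : 'I_n.+2 -> 'I_n.+2 -> R) :
    (2%:R : R) \is a GRing.unit -> is_frieze c ->
  exists2 d, elem_equiv (frieze_mx c) (diag_last n.+2 d)
           & ab_equiv d (- (- 2%:R) ^+ n * \prod_(i < n.+2) c i (ordS i)).
Proof.
move=> u2; elim: n c => [|n IH] c cF; first exact: frieze_mx2_reduction.
have [d' Md' d'P] := IH _ (frieze_lift0 cF).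
have uw := frieze_w_unit cF.
set w := _ * _ * _ in uw.
have u2w : - (w *+ 2) \is a GRing.unit by rewrite unitrN -mulr_natr unitrMl.
exists (- (w *+ 2) * d').
  apply: (elem_equiv_trans (elem_equiv_frieze_mx_block0 cF u2)).
  apply: (elem_equiv_trans (elem_equiv_block0_mx _ Md')).
  by rewrite block0_mx_diag_last; apply: elem_equiv_diag_ends.
case: cF => cU _ _.
rewrite (@prod_ordS_lift0 _ _ c) ?cU //.
set P' := \prod_(i < n.+2) _ in d'P *.
set s := (- (2%:R : R)) ^+ n in d'P *.
have us : s \is a GRing.unit by rewrite unitrX ?unitrN.
have uP' : P' \is a GRing.unit by case: d'P => _; rewrite mulNr unitrN unitrMr.
apply: (ab_equiv_trans (ab_equivM (ab_equiv_refl u2w) d'P)).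
have scale2E (x y : R) : - (x *+ 2) * (- s * y) = - (- 2%:R) ^+ n.+1 * (x * y).
  rewrite exprSr -/s mulrN opprK mulNr mulrNN -(mulr_natr x 2) !mulrA; congr (_ * y).
  have c2 : GRing.comm x (2%:R * s) by apply/commrM/commrX/commrN/commr_nat/commr_nat.
  by rewrite -mulrA c2 (commr_nat s 2).
rewrite scale2E; apply: ab_equivM; first by apply/ab_equiv_refl; rewrite unitrN unitrX ?unitrN.
set t := _^-1 * _.
have ->: w * P' = c ord0 (lift ord0 ord0) * (t * P') by rewrite /w /t !mulrA.
apply: ab_equivM; first exact/ab_equiv_refl/cU.
by apply: ab_equivC; rewrite // unitrMr ?unitrV ?cU.
Qed.

Theorem theoremA (R : unitRingType) (n : nat) (c : 'I_n -> 'I_n -> R) :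
  skew_field R -> (3 <= n)%N -> is_frieze c ->
  dieudonne_det_is (frieze_mx c)
    (- ((- 2%:R) ^+ (n - 2)) * \prod_(i < n) c i (ordS i)).
Proof.
move=> skewR; case: n c => [|[|[|n]]] c // _ cF.
rewrite (_ : (n.+3 - 2 = n.+1)%N) //.
have [two0|two_nz] := eqVneq (2%:R : R) 0.
  left; split; first exact: frieze_mx_not_invertible cF two0.
  by rewrite two0 oppr0 expr0n /= oppr0 mul0r.
have [d [E eE ->] dP] := frieze_mx_reduction (skewR _ two_nz) cF.
by right; exists E, d; split=> //; right.
Qed.
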